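(* Let $D$ be a digraph rooted at $r$ and let $w \in V(D) \setminus \{r\}$. Suppose that $I \in \mathcal{G}_D(w)$ is such that $I \cup \{f\} \in \mathcal{G}_D(w)$ for every $f \in \mathrm{in}_D(w) \setminus I$. Assume that there is an edge $uv \in E(D)$ with $u \neq r$ and $v \neq w$ for which $I \notin \mathcal{G}_{D - uv}(w)$. Then there exist a set $S \subseteq V(D) \setminus \{r\}$ containing $v$ and an $(r,S)$-path-system $\mathcal{P}$ with $V^+(\mathcal{P}) = S$ such that $S$ separates the tails of the edges in $\mathrm{in}_D(v) \setminus \{uv\}$ from $r$ (i.e. every directed path from $r$ to such a tail meets $S$). In particular, $uv$ is the last edge of some $P \in \mathcal{P}$.
   Context: Digraphs have no loops or parallel edges; $D - uv$ is $D$ with the edge $uv$ deleted. $\mathrm{in}_H(w)$ is the set of edges of $H$ with head $w$. An $(r,w)$-path-system is a set of pairwise internally disjoint directed paths from $r$ to $w$; $E^+(\mathcal{P})$ is the set of terminal edges of the paths in $\mathcal{P}$. $\mathcal{G}_H(w)$ is the set of all $I \subseteq \mathrm{in}_H(w)$ for which some $(r,w)$-path-system $\mathcal{P}$ in $H$ has $E^+(\mathcal{P}) = I$. An $(r,S)$-path is a directed path starting at $r$, ending in $S$, and internally disjoint from $S$; an $(r,S)$-path-system is a set of $(r,S)$-paths pairwise disjoint except at $r$. $V^+(\mathcal{P})$ is the set of terminal vertices of the paths in $\mathcal{P}$. *)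

From mathcomp Require Import all_boot.
Set Implicit Arguments. Unset Strict Implicit. Unset Printing Implicit Defensive.

Section Digraphs.
Variable V : finType.

(* A digraph on vertex set V is an irreflexive relation e (no loops); edges are
   pairs (x,y) with e x y, so there are no parallel edges. *)
Definition loopless (e : rel V) := forall x, ~~ e x x.

Definition edges (e : rel V) : {set V * V} := [set f | e f.1 f.2].

Definition in_edges (e : rel V) (w : V) : {set V * V} :=
  [set f | e f.1 f.2 && (f.2 == w)].

Definition del_edge (e : rel V) (u v : V) : rel V :=
  fun x y => e x y && ((x, y) != (u, v)).

(* A directed path from x is represented by the list p of its vertices after x;
   the full vertex sequence is x :: p. *)
Definition dpath (e : rel V) (x y : V) (p : seq V) : bool :=
  [&& path e x p, uniq (x :: p) & last x p == y].

Definition interior (x : V) (p : seq V) : seq V := behead (belast x p).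

(* last edge of the path x :: p (meaningful when p is nonempty) *)
Definition term_edge (x : V) (p : seq V) : V * V :=
  (last x (belast x p), last x p).

Definition rw_path_system (e : rel V) (r w : V) (Ps : seq (seq V)) : Prop :=
  [/\ uniq Ps,
      forall p, p \in Ps -> dpath e r w p &
      forall p q, p \in Ps -> q \in Ps -> p != q ->
        [disjoint interior r p & interior r q]].

Definition Eplus (r : V) (Ps : seq (seq V)) : {set V * V} :=
  [set f | f \in map (term_edge r) Ps].

Definition Vplus (r : V) (Ps : seq (seq V)) : {set V} :=
  [set x | x \in map (last r) Ps].

Definition in_G (e : rel V) (r w : V) (I : {set V * V}) : Prop :=
  I \subset in_edges e w /\
  exists Ps, rw_path_system e r w Ps /\ Eplus r Ps = I.

Definition rS_path (e : rel V) (r : V) (S : {set V}) (p : seq V) : Prop :=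
  [/\ dpath e r (last r p) p, last r p \in S &
      [disjoint interior r p & S]].

(* (r,S)-path-system: (r,S)-paths pairwise disjoint except at r *)
Definition rS_path_system (e : rel V) (r : V) (S : {set V}) (Ps : seq (seq V)) : Prop :=
  [/\ uniq Ps,
      forall p, p \in Ps -> rS_path e r S p &
      forall p q, p \in Ps -> q \in Ps -> p != q -> [disjoint p & q]].

Definition separates (e : rel V) (r : V) (S : {set V}) (t : V) : Prop :=
  forall p, dpath e r t p -> has (mem S) (r :: p).

End Digraphs.

(* Write B for the tails other than r of the edges of I, and A for the
   out-neighbours of r other than w.  If I is not realised in D - uv, Menger's
   theorem gives a set Z, with |Z| < |B| and r, w outside Z, meeting every walk
   from A to B in D - r - w - uv.  The interiors of a path system realising I
   are |B| disjoint such walks in D - r - w, so one of them avoids Z; it must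
   use uv, and its part after v reaches B avoiding Z.  Hence u is the only
   in-neighbour of v that r reaches avoiding v, w and Z.
   Let S be {v} together with Z, and w as well if some vertex reached in that
   way has an edge f to w; then I + f (or I, if f = rw) is realised by more
   than |B| paths.  Cutting every path of a system realising I, or I + f, at its
   first vertex in S, counting shows that all of {v} and Z are reached, and a
   remaining path ends at w when w is in S; the path reaching v ends with uv. *)

From mathcomp Require Import all_boot zify.
From Stdlib Require Import Classical.

Set Implicit Arguments. Unset Strict Implicit. Unset Printing Implicit Defensive.

Section Sequences.
Variable V : finType.
Implicit Types (s t : seq V).

Lemma disjointP (P Q : {pred V}) :
  reflect (forall x, x \in P -> x \in Q -> False) [disjoint P & Q].
Proof.
apply: (iffP idP) => [dPQ x xP | nPQ]; first by rewrite (disjointFr dPQ xP).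
rewrite disjoint_subset; apply/subsetP => x xP; rewrite inE /=.
by apply/negP; exact: nPQ.
Qed.

Lemma has_memP (A : {pred V}) s :
  reflect (exists2 x, x \in s & x \in A) (has (mem A) s).
Proof. exact: hasP. Qed.

Definition upto_first (P : pred V) s := take (find P s).+1 s.

Definition from_last (P : pred V) s := rev (upto_first P (rev s)).

Lemma upto_firstP (P : pred V) s : has P s ->
  exists s1 z s2,
    [/\ s = s1 ++ z :: s2, P z, ~~ has P s1 & upto_first P s = rcons s1 z].
Proof.
elim: s => //= a s IH; rewrite /upto_first /=; case: ifP => [Pa _ | Pa].
  by exists [::], a, s; rewrite take0.
move=> /IH [s1 [z [s2 [-> Pz Ps1 Es]]]].
by exists (a :: s1), z, s2; rewrite /= Pa -Es.
Qed.

Lemma from_lastP (P : pred V) s : has P s ->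
  exists s1 z s2,
    [/\ s = s1 ++ z :: s2, P z, ~~ has P s2 & from_last P s = z :: s2].
Proof.
rewrite -has_rev => /upto_firstP [s1 [z [s2 [Es Pz Ps1 Eu]]]].
exists (rev s2), z, (rev s1); split => //.
- by rewrite -[s]revK Es rev_cat rev_cons cat_rcons.
- by rewrite has_rev.
- by rewrite /from_last Eu rev_rcons.
Qed.

Lemma last_in_seq (x : V) s : (last x s \in s) = (s != [::]).
Proof. by case: s => //= h t; rewrite mem_last. Qed.

Lemma split_rcons (s1 : seq V) z c : c \in rcons s1 z ->
  exists sa sb, rcons s1 z = sa ++ c :: sb /\ {subset sa <= s1}.
Proof.
rewrite mem_rcons inE => /orP[/eqP -> | /splitPr[sa sb]].
  by exists s1, [::]; rewrite cats1; split.
by exists sa, (rcons sb z); rewrite rcons_cat; split => // d da; rewrite mem_cat da.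
Qed.

Lemma split_cons z t c : c \in z :: t ->
  exists ta tb, z :: t = ta ++ c :: tb /\ {subset tb <= t}.
Proof.
rewrite inE => /orP[/eqP -> | /splitPr[ta tb]]; first by exists [::], t; split.
by exists (z :: ta), tb; split => // d db; rewrite mem_cat inE db !orbT.
Qed.

Lemma uniq_cover (l : seq V) (X : {set V}) : uniq l -> {subset l <= X} -> #|X| <= size l ->
  {subset X <= l}.
Proof.
move=> ul lX cX x xX.
have lX' : {subset l <= enum X} by move=> y /lX; rewrite mem_enum.
have cX' : size (enum X) <= size l by rewrite -cardE.
have [_ ->] := uniq_min_size ul lX' cX'.
by rewrite mem_enum.
Qed.

Lemma pick_preimage (T U : eqType) (f : T -> U) (l : seq T) (x0 : T) :
  exists F : U -> T, forall y, y \in map f l -> F y \in l /\ f (F y) = y.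
Proof.
exists (fun y => nth x0 l (index y (map f l))) => y yl.
have il : index y (map f l) < size l by rewrite -(size_map f) index_mem.
by rewrite mem_nth // -(nth_map x0 y) // nth_index.
Qed.

End Sequences.

Section Walks.
Variable V : finType.
Implicit Types (g : rel V) (A B C D Z : {set V}) (s t : seq V) (Ps : seq (seq V)).

Lemma del_edge_sub g x y : subrel (del_edge g x y) g.
Proof. by move=> a b /andP[]. Qed.

Lemma path_del_edge_or g x y h t : path g h t ->
  path (del_edge g x y) h t \/ exists s1 s2, h :: t = s1 ++ x :: y :: s2.
Proof.
elim: t h => [|a t IH] h /=; first by left.
move=> /andP[gha /IH [pt | [s1 [s2 E]]]]; last first.
  by right; exists (h :: s1), s2; rewrite E.
case: (eqVneq (h, a) (x, y)) => [[-> ->] | ne]; first by right; exists [::], t.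
by left; rewrite /del_edge gha ne pt.
Qed.

Lemma path_del_edge g x y h t : path g h t -> x \notin belast h t ->
  path (del_edge g x y) h t.
Proof.
elim: t h => [|a t IH] h //= /andP[gha pt].
rewrite inE negb_or => /andP[xh xt].
by rewrite /del_edge gha xpair_eqE eq_sym (negbTE xh) IH.
Qed.

Lemma path_del_edge_head g x y h t : path g h t -> y \notin t ->
  path (del_edge g x y) h t.
Proof.
elim: t h => [|a t IH] h //= /andP[gha pt].
rewrite inE negb_or => /andP[ya yt].
by rewrite /del_edge gha xpair_eqE [a == y]eq_sym (negbTE ya) andbF IH.
Qed.

Lemma sorted_del_edge g x y s1 z : sorted g (rcons s1 z) -> x \notin s1 ->
  sorted (del_edge g x y) (rcons s1 z).
Proof. by case: s1 => //= h t pt xt; apply: path_del_edge; rewrite ?belast_rcons. Qed.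

(* Unlike [dpath], a walk lists its first vertex, and may repeat vertices. *)
Definition ab_walk g A B s :=
  if s is h :: t then [&& h \in A, path g h t & last h t \in B] else false.

Definition separator g A B Z := forall s, ab_walk g A B s -> has (mem Z) s.

Definition disjoint_family Ps :=
  uniq Ps /\ forall s t, s \in Ps -> t \in Ps -> s != t -> [disjoint s & t].

Lemma ab_walk_last g A B s x0 : ab_walk g A B s -> last x0 s \in B.
Proof. by case: s => //= h t /and3P[]. Qed.

Lemma ab_walk_sorted g A B s : ab_walk g A B s -> sorted g s.
Proof. by case: s => //= h t /and3P[]. Qed.

Lemma ab_walk_sub g g' A B s : subrel g g' -> ab_walk g A B s -> ab_walk g' A B s.
Proof. by move=> gg'; case: s => //= h t /and3P[-> /(sub_path gg') -> ->]. Qed.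

Lemma ab_walk_prefix g g' A B C s1 z s2 : ab_walk g A B (s1 ++ z :: s2) ->
  sorted g' (rcons s1 z) -> z \in C -> ab_walk g' A C (rcons s1 z).
Proof.
case: s1 => [|h t] /=; first by case/and3P => -> _ _ _ ->.
by case/and3P => -> _ _ -> zC; rewrite last_rcons zC.
Qed.

Lemma ab_walk_suffix g g' A B C s1 z s2 : ab_walk g A B (s1 ++ z :: s2) ->
  path g' z s2 -> z \in C -> ab_walk g' C B (z :: s2).
Proof.
case: s1 => [|h t] /=; first by case/and3P => _ _ -> -> ->.
by case/and3P => _ _; rewrite last_cat /= => -> -> ->.
Qed.

Lemma ab_walk_cat g A B C D s1 c t : ab_walk g A C (rcons s1 c) ->
  ab_walk g D B (c :: t) -> ab_walk g A B (s1 ++ c :: t).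
Proof.
case: s1 => [|h s1] /=; first by case/andP => -> _ /and3P[_ -> ->].
case/and3P => -> p1 _ /and3P[_ pt lt].
by rewrite -cat_rcons cat_path last_cat last_rcons p1 pt.
Qed.

Lemma ab_walk_glue g A B C D sa c sb ta tb : ab_walk g A C (sa ++ c :: sb) ->
  ab_walk g D B (ta ++ c :: tb) -> ab_walk g A B (sa ++ c :: tb).
Proof.
move=> w1 w2; have c1 : c \in [set c] by rewrite inE.
have := ab_walk_sorted w1; rewrite sorted_cat_cons => /andP[s1 _].
have := ab_walk_sorted w2; rewrite sorted_cat_cons => /andP[_ s2].
exact: (ab_walk_cat (ab_walk_prefix w1 s1 c1) (ab_walk_suffix w2 s2 c1)).
Qed.

Lemma ab_walk_cat_edge g A B C D s1 x y t : ab_walk g A C (rcons s1 x) ->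
  ab_walk g D B (y :: t) -> g x y -> ab_walk g A B (rcons s1 x ++ y :: t).
Proof.
move=> w1 /and3P[_ pt lt] gxy; rewrite cat_rcons.
by apply: (ab_walk_cat (D := [set x])) w1 _; rewrite /= inE eqxx gxy pt.
Qed.

Lemma disjoint_family_behead s Ps : disjoint_family (s :: Ps) -> disjoint_family Ps.
Proof.
case=> /andP[_ uPs] dPs; split => // a b aPs bPs.
by apply: dPs; rewrite inE ?aPs ?bPs orbT.
Qed.

Lemma disjoint_family_cons s Ps : disjoint_family Ps -> s \notin Ps ->
  (forall t, t \in Ps -> [disjoint s & t]) -> disjoint_family (s :: Ps).
Proof.
case=> uPs dPs sPs ds; split => [|a b]; first by rewrite /= sPs.
rewrite !inE => /orP[/eqP -> | aPs] /orP[/eqP -> | bPs]; rewrite ?eqxx //.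
- by move=> _; exact: ds.
- by move=> _; rewrite disjoint_sym; exact: ds.
- exact: dPs.
Qed.

Lemma disjoint_family_of_map (T : eqType) (f : T -> seq V) (l : seq T) : uniq l ->
  (forall a b, a \in l -> b \in l -> a != b -> [disjoint f a & f b]) ->
  (forall a, a \in l -> f a != [::]) -> disjoint_family (map f l).
Proof.
move=> ul dl nl; split.
  rewrite map_inj_in_uniq // => a b al bl Efab; apply/eqP/negPn/negP => nab.
  have := nl a al; case Efa: (f a) => [|x s] // _.
  have xa : x \in f a by rewrite Efa mem_head.
  have xb : x \in f b by rewrite -Efab.
  exact: (disjointP _ _ (dl a b al bl nab)) x xa xb.
move=> s t /mapP[a al ->] /mapP[b bl ->] nab; apply: dl => //.
by apply: contraNneq nab => ->.
Qed.

Lemma disjoint_family_map (f : seq V -> seq V) Ps : disjoint_family Ps ->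
  (forall s, s \in Ps -> f s != [::] /\ {subset f s <= s}) ->
  disjoint_family (map f Ps).
Proof.
move=> [uPs dPs] hf; apply: disjoint_family_of_map => // [s t sPs tPs nst|s /hf[]//].
have [_ fs] := hf s sPs; have [_ ft] := hf t tPs.
by apply/disjointP => a /fs as' /ft at'; exact: (disjointP _ _ (dPs s t sPs tPs nst)) a as' at'.
Qed.

Lemma disjoint_family_uniq_map (f : seq V -> V) Ps : disjoint_family Ps ->
  (forall s, s \in Ps -> f s \in s) -> uniq (map f Ps).
Proof.
move=> [uPs dPs] hf; rewrite map_inj_in_uniq // => s t sPs tPs Est.
apply/eqP/negPn/negP => nst; have := hf t tPs; rewrite -Est.
exact: (disjointP _ _ (dPs s t sPs tPs nst)) _ (hf s sPs).
Qed.

Lemma disjoint_family_size_hit Ps Z : disjoint_family Ps ->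
  (forall s, s \in Ps -> has (mem Z) s) -> size Ps <= #|Z|.
Proof.
elim: Ps Z => [|s Ps IH] Z //= fam hit.
have /has_memP [z zs zZ] := hit s (mem_head _ _).
rewrite (cardsD1 z Z) zZ ltnS; apply: IH (disjoint_family_behead fam) _.
move=> t tPs; have tPs' : t \in s :: Ps by rewrite inE tPs orbT.
have /has_memP [c ct cZ] := hit t tPs'; apply/has_memP; exists c => //.
rewrite !inE cZ andbT; apply: contraTneq ct => ->.
case: fam => /andP[sPs _] dPs; have nst : s != t by apply: contraNneq sPs => ->.
by rewrite (disjointFr (dPs s t (mem_head _ _) tPs' nst) zs).
Qed.

End Walks.

Arguments del_edge_sub {V g x y}.

Section Menger.
Variable V : finType.
Implicit Types (g : rel V) (A B X Y Z : {set V}) (s t : seq V) (Ps : seq (seq V)).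

Lemma ab_walk_rev g A B s :
  ab_walk (fun a b => g b a) B A (rev s) = ab_walk g A B s.
Proof.
case: s => //= h t; rewrite lastI rev_rcons /= rev_path.
have -> : last (last h t) (rev (belast h t)) = h.
  by case: t => //= a t; rewrite rev_cons last_rcons.
by apply/and3P/and3P => -[-> -> ->].
Qed.

Definition linkage g A B k := exists Ps,
  [/\ size Ps = k, disjoint_family Ps & forall s, s \in Ps -> ab_walk g A B s].

Lemma linkage_sub g g' A B k : subrel g g' -> linkage g A B k -> linkage g' A B k.
Proof. by move=> gg' [Ps [sz fam w]]; exists Ps; split => // s /w; apply: ab_walk_sub. Qed.

Lemma linkage_edgeless g A B k : (forall a b, ~~ g a b) ->
  (forall Z, separator g A B Z -> k <= #|Z|) -> linkage g A B k.
Proof.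
move=> g0 sepk.
have kAB : k <= #|A :&: B|.
  apply: sepk => -[|h [|a t]] //=; first by case/andP => hA hB; rewrite inE hA hB.
  by case/and3P => _ /andP[gha _]; rewrite (negbTE (g0 h a)) in gha.
exists (map (fun a => [:: a]) (take k (enum (A :&: B)))); split.
- by rewrite size_map size_takel // -cardE.
- apply: disjoint_family_of_map => //; first by apply: take_uniq; exact: enum_uniq.
  move=> a b _ _ nab; apply/disjointP => c; rewrite !inE => /eqP -> /eqP Eab.
  by rewrite Eab eqxx in nab.
- move=> s /mapP[a /mem_take]; rewrite mem_enum inE => /andP[aA aB] ->.
  by rewrite /= aA aB.
Qed.

Lemma separator_del_edge g x y A B Y : separator (del_edge g x y) A B Y ->
  separator g A B (x |: Y) /\ separator g A B (y |: Y).
Proof.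
move=> sepY.
have hit s : ab_walk g A B s -> has (mem Y) s \/ x \in s /\ y \in s.
  case: s => [|h t] // w; case/and3P: (w) => hA pt hB.
  case: (path_del_edge_or x y pt) => [pt' | [s1 [s2 ->]]].
    by left; apply: sepY; rewrite /= hA pt' hB.
  by right; rewrite !mem_cat !inE !eqxx !orbT.
by split=> s /hit [/has_memP [c cs cY] | [xs ys]]; apply/has_memP;
  [exists c | exists x | exists c | exists y]; rewrite // !inE ?cY ?eqxx ?orbT.
Qed.

Lemma separator_prefix g x y A B X Z : x \in X -> separator g A B X ->
  separator (del_edge g x y) A X Z -> separator g A B Z.
Proof.
move=> xX sepX sepZ s w.
have [s1 [z [s2 [Es zX s1X _]]]] := upto_firstP (sepX s w).
rewrite {s}Es in w *.
have := ab_walk_sorted w; rewrite sorted_cat_cons => /andP[ss1 _].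
have x_s1 : x \notin s1 by apply: contra s1X => xs1; apply/hasP; exists x.
have /hasP [c cs cZ] := sepZ _ (ab_walk_prefix w (sorted_del_edge y ss1 x_s1) zX).
by apply/hasP; exists c; rewrite // -cat_rcons mem_cat cs.
Qed.

Lemma separator_suffix g x y A B X Z : y \in X -> separator g A B X ->
  separator (del_edge g x y) X B Z -> separator g A B Z.
Proof.
move=> yX sepX sepZ s w.
have [s1 [z [s2 [Es zX s2X _]]]] := from_lastP (sepX s w).
rewrite {s}Es in w *.
have := ab_walk_sorted w; rewrite sorted_cat_cons => /andP[_ ps2].
have y_s2 : y \notin s2 by apply: contra s2X => ys2; apply/hasP; exists y.
have /hasP [c cs cZ] := sepZ _ (ab_walk_suffix w (path_del_edge_head x ps2 y_s2) zX).
by apply/hasP; exists c; rewrite // mem_cat cs orbT.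
Qed.

Lemma fan_ends g A X Ps : disjoint_family Ps -> size Ps = #|X| ->
  (forall s, s \in Ps -> ab_walk g A X s) ->
  exists pre : V -> seq V,
    [/\ forall z, z \in X -> exists2 s1, pre z = rcons s1 z & ~~ has (mem X) s1,
        forall z, z \in X -> ab_walk g A X (pre z) &
        forall z z', z \in X -> z' \in X -> z != z' -> [disjoint pre z & pre z']].
Proof.
move=> fam sz walk; have [X0 | [x0 _]] := set_0Vmem X.
  by exists (fun=> [::]); split => z; rewrite X0 inE.
have hitX s : s \in Ps -> has (mem X) s.
  move=> /walk w; apply/hasP; exists (last x0 s); last exact: ab_walk_last w.
  by case: s w => //= h t _; exact: mem_last.
pose Ps' := map (upto_first (mem X)) Ps.
have shape s : s \in Ps' ->
    exists2 s1, s = rcons s1 (last x0 s) & ~~ has (mem X) s1 /\ ab_walk g A X s.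
  case/mapP => s0 /[dup] s0Ps /hitX /upto_firstP [s1 [z [s2 [Es zX s1X ->]]]] ->.
  exists s1; rewrite ?last_rcons //; split => //.
  have := walk s0 s0Ps; rewrite Es => w.
  have := ab_walk_sorted w; rewrite sorted_cat_cons => /andP[ss1 _].
  exact: ab_walk_prefix w ss1 zX.
have fam' : disjoint_family Ps'.
  apply: disjoint_family_map fam _ => s sPs; split; last exact: mem_take.
  by have [s1 [z [s2 [_ _ _ ->]]]] := upto_firstP (hitX s sPs); case: s1.
have ends_uniq : uniq (map (last x0) Ps').
  apply: disjoint_family_uniq_map fam' _ => s /shape [s1 Es _].
  by rewrite Es last_rcons mem_rcons mem_head.
have ends_cover : {subset X <= map (last x0) Ps'}.
  apply: uniq_cover ends_uniq _ _; last by rewrite !size_map sz.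
  by move=> z /mapP[s /shape [_ _ [_ w]] ->]; exact: ab_walk_last w.
have [pre preP] := pick_preimage (last x0) Ps' [::].
have {}preP z : z \in X -> pre z \in Ps' /\ last x0 (pre z) = z.
  by move=> /ends_cover; exact: preP.
exists pre; split.
- move=> z /preP [pPs Ez]; have [s1 Es [s1X _]] := shape _ pPs.
  by exists s1; rewrite // Es Ez.
- by move=> z /preP [pPs _]; case: (shape _ pPs) => s1 _ [].
- move=> z z' /preP [pPs Ez] /preP [pPs' Ez'] nzz'.
  by apply: fam'.2 => //; apply: contraNneq nzz' => E; rewrite -Ez -Ez' E.
Qed.

Lemma fan_starts g X B Ps : disjoint_family Ps -> size Ps = #|X| ->
  (forall s, s \in Ps -> ab_walk g X B s) ->
  exists suf : V -> seq V,
    [/\ forall z, z \in X -> exists2 t, suf z = z :: t & ~~ has (mem X) t,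
        forall z, z \in X -> ab_walk g X B (suf z) &
        forall z z', z \in X -> z' \in X -> z != z' -> [disjoint suf z & suf z']].
Proof.
move=> fam sz walk.
have fam' : disjoint_family (map rev Ps).
  apply: disjoint_family_map fam _ => s /walk; case: s => // h t _.
  by split => [|c]; rewrite ?mem_rev // -size_eq0 size_rev.
have sz' : size (map rev Ps) = #|X| by rewrite size_map.
have walk' s : s \in map rev Ps -> ab_walk (fun a b => g b a) B X s.
  by case/mapP => s0 /walk; rewrite -ab_walk_rev => w ->.
have [pre [pre_shape pre_walk pre_disj]] := fan_ends fam' sz' walk'.
exists (fun z => rev (pre z)); split.
- move=> z /pre_shape [s1 -> s1X].
  by exists (rev s1); rewrite ?rev_rcons ?has_rev.
- by move=> z /pre_walk; rewrite -ab_walk_rev.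
- move=> z z' zX z'X nzz'; rewrite (eq_disjoint (mem_rev _)) disjoint_sym.
  by rewrite (eq_disjoint (mem_rev _)) disjoint_sym; exact: pre_disj.
Qed.

Section Bridge.
Variables (g : rel V) (x y : V) (A B Y : {set V}) (pre suf : V -> seq V).
Local Notation g' := (del_edge g x y).
Local Notation X := (x |: Y).
Local Notation X' := (y |: Y).
Hypotheses (gxy : g x y) (yY : y \notin Y).
Hypothesis sepY : separator g' A B Y.
Hypothesis pre_shape :
  forall z, z \in X -> exists2 s1, pre z = rcons s1 z & ~~ has (mem X) s1.
Hypothesis pre_walk : forall z, z \in X -> ab_walk g' A X (pre z).
Hypothesis pre_disjoint :
  forall z z', z \in X -> z' \in X -> z != z' -> [disjoint pre z & pre z'].
Hypothesis suf_shape :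
  forall z, z \in X' -> exists2 t, suf z = z :: t & ~~ has (mem X') t.
Hypothesis suf_walk : forall z, z \in X' -> ab_walk g' X' B (suf z).
Hypothesis suf_disjoint :
  forall z z', z \in X' -> z' \in X' -> z != z' -> [disjoint suf z & suf z'].

(* Glued at a common vertex, the two walks form an A-B walk of [g'], which can
   meet [Y] only at the glueing point. *)
Lemma pre_suf_meet z z' c : z \in X -> z' \in X' -> c \in pre z -> c \in suf z' ->
  [/\ c \in Y, c = z & c = z'].
Proof.
move=> zX z'X'; have w1 := pre_walk zX; have w2 := suf_walk z'X'.
have [s1 Epre s1X] := pre_shape zX; have [t Esuf tX'] := suf_shape z'X'.
rewrite Epre in w1 *; rewrite Esuf in w2 * => cpre csuf.
have [sa [sb [Es sa_s1]]] := split_rcons cpre.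
have [ta [tb [Et tb_t]]] := split_cons csuf.
rewrite Es in w1; rewrite Et in w2.
have cY : c \in Y.
  have := sepY (ab_walk_glue w1 w2); rewrite has_cat /=.
  case/or3P => [/hasP [d /sa_s1 ds1 dY] | // | /hasP [d /tb_t dt dY]].
  - by case/hasP: s1X; exists d => //; exact: setU1r.
  - by case/hasP: tX'; exists d => //; exact: setU1r.
split=> //.
- move: cpre; rewrite mem_rcons inE => /orP[/eqP // | cs1].
  by case/hasP: s1X; exists c => //; exact: setU1r.
- move: csuf; rewrite inE => /orP[/eqP // | ct].
  by case/hasP: tX'; exists c => //; exact: setU1r.
Qed.

Definition mate z := if z == x then y else z.

Definition bridge z := pre z ++ (if z == x then suf y else behead (suf z)).

Lemma mate_in z : z \in X -> mate z \in X'.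
Proof. by rewrite /mate !inE; case: eqP => [_ | _ /= zY]; rewrite ?eqxx ?zY ?orbT. Qed.

Lemma mateY z : mate z \in Y -> mate z = z.
Proof. by rewrite /mate; case: eqP => // _; rewrite (negbTE yY). Qed.

Lemma mate_inj : {in X &, injective mate}.
Proof.
move=> z z' zX z'X; rewrite /mate.
have inY w : w \in X -> w != x -> w \in Y.
  by rewrite !inE => /orP[/eqP -> | //]; rewrite eqxx.
case: eqP => [-> | /eqP zx]; case: eqP => [-> // | /eqP z'x] E.
- by move: (inY _ z'X z'x); rewrite -E (negbTE yY).
- by move: (inY _ zX zx); rewrite E (negbTE yY).
- exact: E.
Qed.

Lemma bridge_sub z c : c \in bridge z -> c \in pre z \/ c \in suf (mate z).
Proof.
by rewrite /bridge /mate mem_cat; case: ifP => _ /orP[]; auto => /mem_behead; auto.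
Qed.

Lemma bridge_walk z : z \in X -> ab_walk g A B (bridge z).
Proof.
move=> zX; have w1 := ab_walk_sub del_edge_sub (pre_walk zX).
have [s1 Epre _] := pre_shape zX; rewrite /bridge Epre in w1 *.
case: eqP => [zx | /eqP zx].
  have [t Esuf _] := suf_shape (setU11 y Y).
  have := ab_walk_sub del_edge_sub (suf_walk (setU11 y Y)); rewrite Esuf => w2.
  by rewrite zx in w1 *; exact: ab_walk_cat_edge w1 w2 gxy.
have zX' : z \in X' by apply: setU1r; move: zX; rewrite !inE (negbTE zx).
have [t Esuf _] := suf_shape zX'.
have := ab_walk_sub del_edge_sub (suf_walk zX'); rewrite Esuf => w2.
by rewrite cat_rcons; exact: ab_walk_cat w1 w2.
Qed.

Lemma bridge_disjoint z z' : z \in X -> z' \in X -> z != z' ->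
  [disjoint bridge z & bridge z'].
Proof.
move=> zX z'X nzz'.
apply/disjointP => c /bridge_sub [cp | cs] /bridge_sub [cp' | cs'].
- exact: (disjointP _ _ (pre_disjoint zX z'X nzz')) c cp cp'.
- have [cY Ez Ec] := pre_suf_meet zX (mate_in z'X) cp cs'.
  have mz' : mate z' = z' by apply: mateY; rewrite -Ec.
  by move: nzz'; rewrite -Ez Ec mz' eqxx.
- have [cY Ez' Ec] := pre_suf_meet z'X (mate_in zX) cp' cs.
  have mz : mate z = z by apply: mateY; rewrite -Ec.
  by move: nzz'; rewrite -Ez' Ec mz eqxx.
- have nm : mate z != mate z' by apply: contra nzz' => /eqP/mate_inj -> //.
  exact: (disjointP _ _ (suf_disjoint (mate_in zX) (mate_in z'X) nm)) c cs cs'.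
Qed.

Lemma linkage_bridge : linkage g A B #|X|.
Proof.
exists (map bridge (enum X)); split.
- by rewrite size_map -cardE.
- apply: disjoint_family_of_map (enum_uniq _) _ _ => [z z'|z]; rewrite !mem_enum.
    exact: bridge_disjoint.
  by move=> /pre_shape [s1 Epre _]; rewrite /bridge Epre -size_eq0 size_cat size_rcons.
- by move=> s /mapP[z]; rewrite mem_enum => zX ->; exact: bridge_walk.
Qed.

End Bridge.

(* If [g - xy] has a separator [Y] with [#|Y| < k], then [x |: Y] and [y |: Y]
   are minimum separators of [g]; linking [A] to [x |: Y] and [y |: Y] to [B]
   in [g - xy] and joining the two linkages across [Y] and [xy] links A to B. *)
Lemma linkage_del_edge g x y A B Y k : g x y ->
  (forall Z, separator g A B Z -> k <= #|Z|) ->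
  separator (del_edge g x y) A B Y -> #|Y| < k ->
  (forall A' B', (forall Z, separator (del_edge g x y) A' B' Z -> k <= #|Z|) ->
     linkage (del_edge g x y) A' B' k) ->
  linkage g A B k.
Proof.
move=> gxy sepk sepY Yk IH; have [sepX sepX'] := separator_del_edge sepY.
have := sepk _ sepX; have := sepk _ sepX'; rewrite !cardsU1.
case xY: (x \in Y); case yY: (y \in Y) => /= ky kx; try lia.
have cX : #|x |: Y| = k by rewrite cardsU1 xY /=; lia.
have cX' : #|y |: Y| = k by rewrite cardsU1 yY /=; lia.
have [P [szP famP wP]] :=
  IH A (x |: Y) (fun Z sZ => sepk Z (separator_prefix (setU11 x Y) sepX sZ)).
have [Q [szQ famQ wQ]] :=
  IH (y |: Y) B (fun Z sZ => sepk Z (separator_suffix (setU11 y Y) sepX' sZ)).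
rewrite -cX in szP; rewrite -cX' in szQ.
have [pre [pre_shape pre_walk pre_disj]] := fan_ends famP szP wP.
have [suf [suf_shape suf_walk suf_disj]] := fan_starts famQ szQ wQ.
rewrite -cX; apply: linkage_bridge gxy _ sepY pre_shape pre_walk pre_disj
  suf_shape suf_walk suf_disj; by rewrite yY.
Qed.

Lemma card_edges_del g x y : g x y -> #|edges (del_edge g x y)| < #|edges g|.
Proof.
move=> gxy; apply: proper_card; apply/properP; split.
  by apply/subsetP => f; rewrite !inE => /andP[].
by exists (x, y); rewrite !inE /del_edge //= gxy eqxx.
Qed.

Theorem menger g A B k : (forall Z, separator g A B Z -> k <= #|Z|) ->
  linkage g A B k.
Proof.
have [n] := ubnP #|edges g|; elim: n g A B k => // n IH g A B k gn sepk.
have [g0 | [[x y]]] := set_0Vmem (edges g).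
  apply: linkage_edgeless sepk => a b; apply/negP => gab.
  by have := in_set0 (a, b); rewrite -g0 inE gab.
rewrite inE /= => gxy.
have IH' A' B' k' : (forall Z, separator (del_edge g x y) A' B' Z -> k' <= #|Z|) ->
    linkage (del_edge g x y) A' B' k'.
  by apply: IH; have := card_edges_del gxy; lia.
case: (classic (exists Y, separator (del_edge g x y) A B Y /\ #|Y| < k)).
  by case=> Y [sepY Yk]; apply: linkage_del_edge gxy sepk sepY Yk _ => A' B'; exact: IH'.
move=> noY; apply: linkage_sub del_edge_sub (IH' _ _ _ _) => Z sepZ.
by rewrite leqNgt; apply/negP => Zk; apply: noY; exists Z.
Qed.

End Menger.

Section PathSystems.
Variables (V : finType) (g : rel V) (r w : V).
Hypothesis wr : w != r.
Implicit Types (p q : seq V) (Ps : seq (seq V)).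

Lemma interior_rcons q : interior r (rcons q w) = q.
Proof. by rewrite /interior belast_rcons. Qed.

Lemma term_edge_rcons q : term_edge r (rcons q w) = (last r q, w).
Proof. by rewrite /term_edge belast_rcons last_rcons. Qed.

Lemma dpath_rcons p : dpath g r w p ->
  exists q, [/\ p = rcons q w, path g r (rcons q w), r \notin q, w \notin q & uniq q].
Proof.
case/and3P => pp up /eqP lp; case/lastP: p pp up lp => [|q x] pp up lp.
  by move: wr; rewrite -lp eqxx.
rewrite last_rcons in lp; subst x; exists q.
move: up; rewrite /= mem_rcons inE negb_or rcons_uniq => /and3P[/andP[rw rq] wq uq].
by split.
Qed.

Lemma rw_path_system_of Ps : (forall p, p \in Ps -> dpath g r w p) ->
  disjoint_family (map (interior r) Ps) -> rw_path_system g r w Ps.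
Proof.
move=> dP [uI dI]; split => // [|p q pPs qPs npq]; first exact: map_uniq uI.
apply: dI; rewrite ?map_f //.
have [p' [Ep _ _ _ _]] := dpath_rcons (dP p pPs).
have [q' [Eq _ _ _ _]] := dpath_rcons (dP q qPs).
by apply: contraNneq npq; rewrite Ep Eq !interior_rcons => ->.
Qed.

Lemma term_edge_inj Ps : rw_path_system g r w Ps -> {in Ps &, injective (term_edge r)}.
Proof.
case=> _ dP dI p p' pPs p'Ps; apply: contra_eq => npp'.
have [q [Ep _ rq _ _]] := dpath_rcons (dP p pPs).
have [q' [Ep' _ rq' _ _]] := dpath_rcons (dP p' p'Ps).
rewrite Ep Ep' !term_edge_rcons; apply/eqP => -[E].
have ne_q s : r \notin s -> last r s = r -> s = [::].
  by move=> rs ls; apply/eqP; move: rs; rewrite -{1}ls last_in_seq negbK.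
case: (eqVneq (last r q) r) => [lq | lq].
  by move: npp'; rewrite Ep Ep' (ne_q _ rq lq) (ne_q _ rq' (etrans (esym E) lq)) eqxx.
have := dI _ _ pPs p'Ps npp'; rewrite Ep Ep' !interior_rcons => /disjointP.
move/(_ (last r q)); apply.
  by rewrite last_in_seq; apply: contraNneq lq => ->.
by rewrite E last_in_seq; apply: contraNneq lq => q'0; rewrite E q'0.
Qed.

Lemma card_Eplus Ps : #|Eplus r Ps| <= size Ps.
Proof.
rewrite -(size_map (term_edge r)); apply: leq_trans (card_size _).
by apply: subset_leq_card; apply/subsetP => f; rewrite inE.
Qed.

End PathSystems.

Section Setting.
Variables (V : finType) (e : rel V) (r w u v : V) (I : {set V * V}).
Hypotheses (loop_e : loopless e) (wr : w != r) (ur : u != r) (vw : v != w).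
Hypothesis I_in : I \subset in_edges e w.
Implicit Types (s t p q : seq V) (Z : {set V}).

Definition inner a b := [&& e a b, a != r, a != w, b != r & b != w].

Definition first_hops := [set a | e r a && (a != w)].

Definition last_hops := [set t | ((t, w) \in I) && (t != r)].

Local Notation G := (del_edge inner u v).

Lemma in_I f : f \in I -> e f.1 f.2 /\ f.2 = w.
Proof. by move/(subsetP I_in); rewrite inE => /andP[-> /eqP ->]. Qed.

Lemma inner_walk_verts B s : ab_walk inner first_hops B s ->
  forall x, x \in s -> x != r /\ x != w.
Proof.
case: s => [|h t] //= /and3P[]; rewrite inE => /andP[erh hw] pt _ x.
rewrite inE => /orP[/eqP -> | ].
  by split => //; apply: contraTneq erh => ->; rewrite (negbTE (loop_e r)).
clear erh hw; elim: t h pt => [|a t IH] h //= /andP[/and5P[_ _ _ ar aw] pt].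
by rewrite inE => /orP[/eqP -> // | ]; exact: IH pt.
Qed.

Lemma path_inner h t : path e h t -> h != r -> h != w -> r \notin t -> w \notin t ->
  path inner h t.
Proof.
elim: t h => [|a t IH] h //= /andP[eha pt] hr hw.
rewrite !inE !negb_or => /andP[ra rt] /andP[wa wt].
by rewrite /inner eha hr hw eq_sym ra eq_sym wa IH // eq_sym.
Qed.

Lemma G_sub : subrel G (del_edge e u v).
Proof. by move=> a b /andP[/and5P[eab _ _ _ _] ab]; rewrite /del_edge eab. Qed.

Definition rw_path_of s := if s is h :: t then rcons (h :: shorten h t) w else [::].

Lemma rw_path_of_walk s : ab_walk G first_hops last_hops s ->
  [/\ dpath (del_edge e u v) r w (rw_path_of s),
      interior r (rw_path_of s) != [::],
      {subset interior r (rw_path_of s) <= s} &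
      term_edge r (rw_path_of s) = (last r s, w)].
Proof.
move=> ws; have verts := inner_walk_verts (ab_walk_sub del_edge_sub ws).
case: s ws verts => [|h t] // /and3P[hA pt tB] verts.
change (rw_path_of (h :: t)) with (rcons (h :: shorten h t) w).
rewrite interior_rcons term_edge_rcons; change (last r (h :: t)) with (last h t).
move: tB; case: (shortenP pt) => t' pt' ut' t't tB.
have sub : {subset h :: t' <= h :: t}.
  by move=> x; rewrite !inE => /orP[-> // | /t't ->]; rewrite orbT.
have [hr hw] := verts h (mem_head _ _).
have nrw x : x \in h :: t' -> x != r /\ x != w by move/sub; exact: verts.
split => //; rewrite /dpath rcons_path last_rcons eqxx andbT.
rewrite -andbA; apply/and3P; split.
- move: hA; rewrite inE => /andP[erh _] /=.
  by rewrite /del_edge erh xpair_eqE [r == u]eq_sym (negbTE ur) (sub_path G_sub pt').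
- move: tB; rewrite inE => /andP[/in_I [etw _] _].
  by rewrite /del_edge etw xpair_eqE [w == v]eq_sym (negbTE vw) andbF.
- rewrite cons_uniq rcons_uniq mem_rcons in_cons negb_or eq_sym wr ut' andbT /=.
  by apply/andP; split; apply/negP => /nrw []; rewrite ?eqxx.
Qed.

Definition direct_path := if (r, w) \in I then [:: [:: w]] else [::].

Lemma direct_pathP p : p \in direct_path -> p = [:: w] /\ (r, w) \in I.
Proof. by rewrite /direct_path; case: ifP => // rwI; rewrite inE => /eqP. Qed.

Section Linkage.
Variable Ws : seq (seq V).
Hypotheses (sz : size Ws = #|last_hops|) (fam : disjoint_family Ws).
Hypothesis walk : forall s, s \in Ws -> ab_walk G first_hops last_hops s.

Local Notation Ps := (direct_path ++ map rw_path_of Ws).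

Lemma rw_path_system_linkage : rw_path_system (del_edge e u v) r w Ps.
Proof.
have paths s : s \in Ws -> _ := fun sWs => rw_path_of_walk (walk sWs).
apply: (rw_path_system_of wr) => [p | ].
  rewrite mem_cat => /orP[/direct_pathP [-> /in_I [erw _]] | /mapP[s sWs ->]];
    last by have [] := paths s sWs.
  rewrite /dpath /= /del_edge erw xpair_eqE [w == v]eq_sym (negbTE vw) andbF.
  by rewrite inE eq_sym wr eqxx.
have famW : disjoint_family (map (interior r) (map rw_path_of Ws)).
  rewrite -map_comp; apply: disjoint_family_of_map fam.1 _ _; last first.
    by move=> s /paths[].
  move=> s s' sWs s'Ws ns /=.
  have [_ _ sub _] := paths s sWs; have [_ _ sub' _] := paths s' s'Ws.
  apply/disjointP => c /sub cs /sub' cs'.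
  exact: (disjointP _ _ (fam.2 s s' sWs s'Ws ns)) c cs cs'.
rewrite /direct_path; case: ifP => _ //=; apply: disjoint_family_cons famW _ _.
  by apply/mapP => -[p /mapP[s /paths[_ ne _ _] ->] E]; rewrite -E eqxx in ne.
by move=> p _; rewrite /interior /=; exact: disjoint0.
Qed.

Lemma Eplus_linkage : Eplus r Ps = I.
Proof.
apply/setP => f; rewrite inE; apply/mapP/idP.
  case=> p; rewrite mem_cat => /orP[/direct_pathP [-> rwI] | /mapP[s sWs ->]] ->.
    exact: rwI.
  have [_ _ _ ->] := rw_path_of_walk (walk sWs).
  by move: (ab_walk_last r (walk sWs)); rewrite inE => /andP[].
move=> fI; have [_ fw] := in_I fI; case: f fI fw => t w' fI /= fw; subst w'.
case: (eqVneq t r) => [tr | tr].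
  exists [:: w]; last by rewrite tr.
  by rewrite mem_cat /direct_path -tr fI mem_head.
have ends_uniq : uniq (map (last r) Ws).
  apply: disjoint_family_uniq_map fam _ => -[|h t'] /walk //= _; exact: mem_last.
have ends_sub : {subset map (last r) Ws <= last_hops}.
  by move=> x /mapP[s /walk w_s ->]; exact: ab_walk_last w_s.
have tB : t \in last_hops by rewrite inE fI tr.
have ends_size : #|last_hops| <= size (map (last r) Ws) by rewrite size_map sz.
have /mapP[s sWs ->] := uniq_cover ends_uniq ends_sub ends_size tB.
exists (rw_path_of s); first by rewrite mem_cat map_f ?orbT.
by have [_ _ _ ->] := rw_path_of_walk (walk sWs).
Qed.

End Linkage.

Lemma inG_of_linkage : linkage G first_hops last_hops #|last_hops| ->
  in_G (del_edge e u v) r w I.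
Proof.
case=> Ws [sz fam walk]; split.
  apply/subsetP => f /[dup] fI /in_I [ef fw]; rewrite inE /del_edge ef fw eqxx andbT.
  by rewrite xpair_eqE [w == v]eq_sym (negbTE vw) andbF.
exists (direct_path ++ map rw_path_of Ws).
by split; [exact: rw_path_system_linkage | exact: Eplus_linkage].
Qed.

Lemma small_separator : ~ in_G (del_edge e u v) r w I ->
  exists Z, [/\ separator G first_hops last_hops Z, #|Z| < #|last_hops|,
                r \notin Z & w \notin Z].
Proof.
move=> notG; apply: NNPP => noZ; apply/notG/inG_of_linkage/menger => Z sepZ.
rewrite leqNgt; apply/negP => small; apply: noZ; exists (Z :\: [set r; w]); split.
- move=> s ws; have /has_memP [x xs xZ] := sepZ s ws.
  have [xr xw] := inner_walk_verts (ab_walk_sub del_edge_sub ws) xs.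
  by apply/has_memP; exists x => //; rewrite !inE xZ andbT negb_or xr xw.
- by apply: leq_ltn_trans small; apply/subset_leq_card/subsetDl.
- by rewrite !inE eqxx.
- by rewrite !inE eqxx orbT.
Qed.

Lemma rw_system_walks Qs : rw_path_system e r w Qs -> Eplus r Qs = I ->
  exists Ws, [/\ disjoint_family Ws, #|last_hops| <= size Ws &
    forall W, W \in Ws -> ab_walk inner first_hops last_hops W /\ uniq W].
Proof.
case=> uQ dQ dI EI; pose L := [seq p <- Qs | interior r p != [::]].
have last_I p : p \in Qs -> (last r (interior r p), w) \in I.
  move=> pQ; rewrite -EI inE; apply/mapP; exists p => //.
  by have [q [-> _ _ _ _]] := dpath_rcons wr (dQ p pQ); rewrite interior_rcons term_edge_rcons.
exists (map (interior r) L); split.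
- apply: disjoint_family_of_map (filter_uniq _ uQ) _ _.
    by move=> a c; rewrite !mem_filter => /andP[_ aQ] /andP[_ cQ]; exact: dI.
  by move=> a; rewrite mem_filter => /andP[].
- have sub : {subset enum last_hops <= map (last r) (map (interior r) L)}.
    move=> t; rewrite mem_enum inE => /andP[tI tr].
    move: tI; rewrite -EI inE => /mapP[p pQ].
    have [q [Ep _ _ _ _]] := dpath_rcons wr (dQ p pQ).
    rewrite Ep term_edge_rcons => -[Et]; rewrite -map_comp; apply/mapP; exists p.
      rewrite mem_filter pQ Ep interior_rcons andbT.
      by apply: contraNneq tr => q0; rewrite Et q0 /= eqxx.
    by rewrite /= Ep interior_rcons.
  by have := uniq_leq_size (enum_uniq _) sub; rewrite !size_map -cardE.
- move=> W /mapP[p]; rewrite mem_filter => /andP[ne pQ] ->.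
  have [q [Ep pp rq wq uq]] := dpath_rcons wr (dQ p pQ).
  have tI := last_I p pQ; rewrite Ep interior_rcons in tI ne *; split => //.
  case: q Ep pp rq wq uq tI ne => [|h t] // Ep pp rq wq _ tI _.
  move: pp; rewrite rcons_path /= => /andP[/andP[erh pt] _].
  move: rq wq; rewrite !inE !negb_or => /andP[rh rt] /andP[wh wt].
  rewrite eq_sym in rh; rewrite eq_sym in wh.
  rewrite erh wh (path_inner pt rh wh rt wt) tI /=.
  have := mem_last h t; rewrite inE => /orP[/eqP -> // | lt].
  by apply: contraNneq rt => <-.
Qed.

Lemma escape_walk Z Qs : separator G first_hops last_hops Z -> #|Z| < #|last_hops| ->
  rw_path_system e r w Qs -> Eplus r Qs = I ->
  exists s2, [/\ path G v s2, last v s2 \in last_hops, ~~ has (mem Z) (v :: s2) & v != r].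
Proof.
move=> sepZ small HQ HE; have [Ws [fam big walk]] := rw_system_walks HQ HE.
have [W WWs WZ] : exists2 W, W \in Ws & ~~ has (mem Z) W.
  apply/hasP; apply: contraTT small => /hasPn allZ; rewrite -leqNgt.
  by apply: leq_trans big (disjoint_family_size_hit fam _) => W /allZ /negbNE.
have [wW uW] := walk W WWs; case: W WWs WZ wW uW => [|h t] // _ WZ wW uW.
have /and3P[hA pt tB] := wW.
have [pt' | [s1 [s2 E]]] := path_del_edge_or u v pt.
  by move: (sepZ (h :: t)); rewrite (negbTE WZ) /= hA pt' tB => /(_ isT).
rewrite {}E in WZ uW wW; exists s2; split.
- have := ab_walk_sorted wW; rewrite sorted_cat_cons => /andP[_ /andP[_ ps2]].
  apply: path_del_edge ps2 _; apply/negP => /mem_belast uvs2.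
  by move: uW; rewrite cat_uniq /= uvs2 !andbF.
- by have := ab_walk_last v wW; rewrite last_cat.
- apply: contra WZ => /has_memP [x xs xZ]; apply/has_memP; exists x => //.
  by rewrite mem_cat in_cons xs !orbT.
- have vW : v \in s1 ++ u :: v :: s2 by rewrite mem_cat !inE eqxx !orbT.
  by have [] := inner_walk_verts wW vW.
Qed.

Lemma card_I : #|I| = #|last_hops| + ((r, w) \in I).
Proof.
rewrite (cardsD1 (r, w) I) addnC; congr (_ + _).
have -> : last_hops = [set f.1 | f in I :\ (r, w)].
  apply/setP => t; rewrite inE; apply/andP/imsetP => [[tI tr] | [f fI ->]].
    by exists (t, w); rewrite // !inE tI andbT xpair_eqE negb_and tr.
  move: fI; rewrite !inE => /andP[nf fI]; have [_ f2] := in_I fI.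
  case: f nf fI f2 => a c /= nf fI f2; subst c; split => //.
  by apply: contraNneq nf => ->.
rewrite card_in_imset // => f f'; rewrite !inE => /andP[_ fI] /andP[_ f'I] E.
have [_ f2] := in_I fI; have [_ f'2] := in_I f'I.
by case: f f' fI f'I f2 f'2 E => a c [a' c'] /= _ _ -> -> ->.
Qed.

Section Reach.
Variables (Z : {set V}) (s2 : seq V).
Hypotheses (sepZ : separator G first_hops last_hops Z) (vr : v != r).
Hypotheses (s2_path : path G v s2) (s2_last : last v s2 \in last_hops).
Hypothesis s2_Z : ~~ has (mem Z) (v :: s2).

Definition blockers := v |: (w |: Z).

Definition open_edge a b := e a b && (b \notin blockers).

Definition reach := [set c | connect open_edge r c].

Lemma path_openE a p : path open_edge a p = path e a p && ~~ has (mem blockers) p.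
Proof.
elim: p a => //= b p IH a; rewrite IH /open_edge negb_or.
by case: (e a b); case: (path e b p); case: (b \in blockers).
Qed.

Lemma reach_path p : path e r p -> ~~ has (mem blockers) p -> last r p \in reach.
Proof. by move=> pp pB; rewrite inE; apply/connectP; exists p; rewrite ?path_openE ?pp. Qed.

Lemma blockers_Z p : ~~ has (mem blockers) p -> ~~ has (mem Z) p.
Proof.
by apply: contra => /has_memP [x xp xZ]; apply/has_memP; exists x; rewrite // !inE xZ !orbT.
Qed.

Lemma path_G_unblocked h t : path e h t -> r \notin h :: t ->
  ~~ has (mem blockers) (h :: t) -> path G h t.
Proof.
elim: t h => [|a t IH] h //= /andP[eha pt]; rewrite !inE !negb_or.
case/and3P=> rh ra rt /and3P[/and3P[_ hw _] /and3P[av aw aZ] tB].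
rewrite /del_edge /inner eha eq_sym rh hw eq_sym ra aw xpair_eqE (negbTE av) andbF /=.
by apply: IH; rewrite //= !inE !negb_or ?ra ?rt ?av ?aw ?aZ ?tB.
Qed.

Lemma reach_walk c : c \in reach -> c != r -> exists h t,
  [/\ h \in first_hops, path G h t, last h t = c & ~~ has (mem blockers) (h :: t)].
Proof.
rewrite inE => /connectP [p pp ->]; case: (shortenP pp) => {pp}p pp up _.
case: p pp up => [|h t]; first by rewrite /= eqxx.
rewrite path_openE cons_uniq => /andP[/andP[erh pt] htB] /andP[rht _] _.
exists h, t; split => //; last exact: path_G_unblocked pt rht htB.
rewrite inE erh; apply: contraNneq htB => hw.
by apply/has_memP; exists h; rewrite ?mem_head // hw !inE eqxx orbT.
Qed.

Lemma reach_in_nbr x : x \in reach -> e x v -> x = u.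
Proof.
move=> xR exv; apply/eqP/negPn/negP => xu; case: (eqVneq x r) => [xr | xr].
  have : ab_walk G first_hops last_hops (v :: s2) by rewrite /= inE -xr exv vw s2_path.
  by move/sepZ; rewrite (negbTE s2_Z).
have [h [t [hA pt lt htB]]] := reach_walk xR xr.
have xw : x != w.
  apply: contraNneq htB => xw; apply/has_memP; exists x; first by rewrite -lt mem_last.
  by rewrite xw !inE eqxx orbT.
have : ab_walk G first_hops last_hops (h :: t ++ v :: s2).
  rewrite /= hA cat_path pt last_cat lt /= s2_path s2_last !andbT.
  by rewrite /del_edge /inner exv xr xw vr vw xpair_eqE (negbTE xu).
by move/sepZ; rewrite -cat_cons has_cat (negbTE (blockers_Z htB)) (negbTE s2_Z).
Qed.

Lemma reach_I y : y \in reach -> (y, w) \in I -> y = r.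
Proof.
move=> yR yI; apply/eqP/negPn/negP => yr.
have [h [t [hA pt lt htB]]] := reach_walk yR yr.
have : ab_walk G first_hops last_hops (h :: t) by rewrite /= hA pt lt inE yI yr.
by move/sepZ; rewrite (negbTE (blockers_Z htB)).
Qed.

Section Cut.
Hypotheses (rZ : r \notin Z) (wZ : w \notin Z).
Variable b : bool.
Hypothesis no_reach_w : ~~ b -> forall y, y \in reach -> ~~ e y w.

Definition core := v |: Z.

(* [cut] is the set S of the statement. *)
Definition cut := if b then w |: core else core.

Lemma core_cut : {subset core <= cut}.
Proof. by move=> x xC; rewrite /cut; case: b => //; exact: setU1r. Qed.

Lemma w_core : w \notin core.
Proof. by rewrite !inE negb_or eq_sym vw wZ. Qed.

Lemma core_free_of_cut s : ~~ has (mem cut) s -> ~~ has (mem core) s.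
Proof.
by apply: contra => /has_memP [x xs xC]; apply/has_memP; exists x; last exact: core_cut.
Qed.

Lemma unblocked s : ~~ has (mem core) s -> w \notin s -> ~~ has (mem blockers) s.
Proof.
move=> sC sw; apply/has_memP => -[x xs]; rewrite !inE => /or3P[/eqP xv | /eqP xw | xZ].
- by case/has_memP: sC; exists x; rewrite // xv !inE eqxx.
- by rewrite -xw xs in sw.
- by case/has_memP: sC; exists x; rewrite // !inE xZ orbT.
Qed.

Lemma cut_free s : ~~ has (mem core) s -> w \notin s -> [disjoint s & cut].
Proof.
move=> sC sw; apply/disjointP => x xs xC.
have : x \in w |: core by move: xC; rewrite /cut; case: (b) => //; exact: setU1r.
rewrite !inE => /orP[/eqP xw | xcore]; first by rewrite -xw xs in sw.
by case/has_memP: sC; exists x; rewrite // !inE.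
Qed.

Lemma cut_separates f : f \in in_edges e v :\: [set (u, v)] -> separates e r cut f.1.
Proof.
case: f => x y; rewrite !inE /= => /andP[nxy /andP[exy /eqP yv]]; subst y.
have xu : x != u by apply: contraNneq nxy => ->.
move=> p /and3P[pp _ /eqP lp]; apply/negPn/negP; rewrite /= negb_or => /andP[_ pC].
have [wp | wp] := boolP (w \in p); last first.
  have := reach_in_nbr (reach_path pp (unblocked (core_free_of_cut pC) wp)).
  by rewrite lp => /(_ exy)/eqP; rewrite (negbTE xu).
have wp1 : has (pred1 w) p by rewrite has_pred1.
have [p1 [z [p2 [Ep /eqP zw p1w _]]]] := upto_firstP wp1; subst z.
rewrite has_pred1 in p1w; move: pp pC; rewrite Ep cat_path has_cat negb_or.
move=> /= /andP[pp1 /andP[ew _]] /andP[p1C wC].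
have yR := reach_path pp1 (unblocked (core_free_of_cut p1C) p1w).
move: wC; rewrite /cut; case: b no_reach_w => [_ | /(_ isT _ yR)]; last by rewrite ew.
by rewrite !inE eqxx.
Qed.

Section Fan.
Variables (J : {set V * V}) (Qs : seq (seq V)).
Hypotheses (IJ : I \subset J) (HQ : rw_path_system e r w Qs) (HE : Eplus r Qs = J).
Hypotheses (small : #|Z| < #|last_hops|) (big_J : b -> #|last_hops| < #|J|).

Definition meets p := has (mem core) p.

Definition trunc p := if meets p then upto_first (mem core) p else p.

Lemma trunc_sub p : {subset trunc p <= p}.
Proof. by rewrite /trunc; case: ifP => _ x //; exact: mem_take. Qed.

Lemma trunc_meets p : p \in Qs -> meets p -> exists s1 z,
  [/\ trunc p = rcons s1 z, z \in core, ~~ has (mem core) s1, w \notin s1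
    & dpath e r z (rcons s1 z)].
Proof.
move=> pQs mp; have [s1 [z [p2 [Ep zC s1C Et]]]] := upto_firstP mp.
have [_ dQ _] := HQ; have /and3P[pp up /eqP lp] := dQ p pQs.
exists s1, z; rewrite /trunc mp Et; split => //.
  have wz : w \in z :: p2 by rewrite -lp Ep last_cat /=; exact: mem_last.
  move: up; rewrite Ep /= cat_uniq => /andP[_ /and3P[_ /hasPn dis _]].
  exact: dis _ wz.
rewrite /dpath last_rcons eqxx andbT.
move: pp up; rewrite Ep -cat_rcons cat_path -cat_cons cat_uniq.
by case/andP=> -> _ /andP[-> _].
Qed.

Lemma trunc_free p : p \in Qs -> ~~ meets p -> trunc p = p /\ exists2 q, p = rcons q w &
  [/\ ~~ has (mem core) q, w \notin q, last r q \in reach, (last r q, w) \in J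
    & e (last r q) w].
Proof.
move=> pQs nm; split; first by rewrite /trunc (negbTE nm).
have [_ dQ _] := HQ; have [q [Ep pq _ wq _]] := dpath_rcons wr (dQ p pQs).
have qC : ~~ has (mem core) q by apply: contra nm; rewrite /meets Ep -cats1 has_cat => ->.
move: pq; rewrite rcons_path => /andP[pq eqw].
exists q => //; split => //; first exact: reach_path pq (unblocked qC wq).
by rewrite -HE inE; apply/mapP; exists p; rewrite // Ep term_edge_rcons.
Qed.

Lemma trunc_w p : p \in Qs -> w \in trunc p -> ~~ meets p.
Proof.
move=> pQs; apply: contraTN => mp; have [s1 [z [-> zC _ ws1 _]]] := trunc_meets pQs mp.
by rewrite mem_rcons inE negb_or ws1 andbT; apply: contraNneq w_core => ->.
Qed.

Lemma trunc_nil p : p \in Qs -> trunc p != [::].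
Proof.
move=> pQs; have [mp | nm] := boolP (meets p).
  by have [s1 [z [-> _ _ _ _]]] := trunc_meets pQs mp; rewrite -size_eq0 size_rcons.
by have [-> [q -> _]] := trunc_free pQs nm; rewrite -size_eq0 size_rcons.
Qed.

Lemma trunc_disjoint p p' : p \in Qs -> p' \in Qs -> p != p' -> meets p || meets p' ->
  [disjoint trunc p & trunc p'].
Proof.
move=> pQs p'Qs npp' m; have [_ dQ dI] := HQ.
have int q c : q \in Qs -> c \in trunc q -> c != w -> c \in interior r q.
  move=> qQs /trunc_sub cq cw; have [q' [Eq _ _ _ _]] := dpath_rcons wr (dQ q qQs).
  by move: cq; rewrite Eq interior_rcons mem_rcons inE (negbTE cw).
apply/disjointP => c cp cp'; case: (eqVneq c w) => [cw | cw].
  rewrite cw in cp cp'.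
  by move: m; rewrite (negbTE (trunc_w pQs cp)) (negbTE (trunc_w p'Qs cp')).
exact: (disjointP _ _ (dI p p' pQs p'Qs npp')) c (int p c pQs cp cw) (int p' c p'Qs cp' cw).
Qed.

Lemma trunc_rS p : p \in Qs -> meets p || b -> rS_path e r cut (trunc p).
Proof.
move=> pQs; have [mp _ | nm /= bb] := boolP (meets p).
  have [s1 [z [-> zC s1C ws1 dp]]] := trunc_meets pQs mp.
  by split; rewrite ?last_rcons ?interior_rcons ?core_cut //; exact: cut_free.
have [-> [q Ep [qC wq _ _ _]]] := trunc_free pQs nm; have [_ dQ _] := HQ.
split; rewrite ?Ep ?last_rcons ?interior_rcons; first by rewrite -Ep; exact: dQ.
  by rewrite /cut bb !inE eqxx.
exact: cut_free.
Qed.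

Local Notation M := [seq p <- Qs | meets p].
Local Notation N := [seq p <- Qs | ~~ meets p].

(* A path avoiding [core] ends with an edge of [J] from [reach]; such an edge
   lies outside [I] unless it is [rw]. *)
Lemma size_N : size N <= #|J :\: I| + ((r, w) \in I).
Proof.
have [uQ _ _] := HQ.
have uN : uniq (map (term_edge r) N).
  rewrite map_inj_in_uniq ?filter_uniq // => p q.
  rewrite !mem_filter => /andP[_ pQ] /andP[_ qQ]; exact: (term_edge_inj wr HQ) _ _ pQ qQ.
pose X : {set V * V} := if (r, w) \in I then [set (r, w)] else set0.
have : map (term_edge r) N \subset (J :\: I) :|: X.
  apply/subsetP => f /mapP[p]; rewrite mem_filter => /andP[nm pQ] ->.
  have [_ [q -> [_ _ qR qJ _]]] := trunc_free pQ nm; rewrite term_edge_rcons.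
  have [qI | qI] := boolP ((last r q, w) \in I); last by rewrite !inE qI qJ.
  by have qr := reach_I qR qI; rewrite qr in qI *; rewrite /X qI !inE eqxx orbT.
move/subset_leq_card; rewrite (card_uniqP uN) size_map => /leq_trans; apply.
apply: leq_trans (leq_card_setU _ _).1 _.
by rewrite /X; case: ((r, w) \in I); rewrite ?cards1 ?cards0.
Qed.

Lemma size_MN : size M + size N = size Qs.
Proof. by rewrite !size_filter; exact: count_predC. Qed.

Lemma core_le_M : #|core| <= size M.
Proof.
have cC : #|core| <= #|Z|.+1 by rewrite cardsU1; case: (v \in Z).
apply: leq_trans cC (leq_trans small _).
have cJ := card_Eplus r Qs.
rewrite HE -(cardsID I J) (setIidPr IJ) card_I -addnA in cJ.
rewrite -(leq_add2r (#|J :\: I| + ((r, w) \in I))).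
apply: leq_trans (leq_add (leqnn (size M)) size_N); rewrite size_MN.
by rewrite [_ + (_ \in _)]addnC.
Qed.

Lemma family_M : disjoint_family (map trunc M).
Proof.
have [uQ _ _] := HQ.
apply: disjoint_family_of_map (filter_uniq _ uQ) _ _ => [p p' | p]; rewrite !mem_filter.
  by move=> /andP[mp pQ] /andP[_ p'Q] np; apply: trunc_disjoint; rewrite ?mp.
by move=> /andP[_ pQ]; exact: trunc_nil.
Qed.

Lemma ends_M_core : {subset map (last r) (map trunc M) <= core}.
Proof.
move=> x /mapP[y /mapP[p pM ->] ->]; move: pM; rewrite mem_filter => /andP[mp pQ].
by have [s1 [z [-> zC _ _ _]]] := trunc_meets pQ mp; rewrite last_rcons.
Qed.

Lemma ends_M_uniq : uniq (map (last r) (map trunc M)).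
Proof.
apply: disjoint_family_uniq_map family_M _ => y /mapP[p pM ->].
by move: pM; rewrite mem_filter last_in_seq => /andP[_ /trunc_nil].
Qed.

Lemma core_ends_M : {subset core <= map (last r) (map trunc M)}.
Proof. by apply: uniq_cover ends_M_uniq ends_M_core _; rewrite !size_map core_le_M. Qed.

Lemma M_le_core : size M <= #|core|.
Proof.
have /card_uniqP := ends_M_uniq; rewrite !size_map => <-.
exact/subset_leq_card/subsetP/ends_M_core.
Qed.

Lemma N_gt0 : b -> 0 < size N.
Proof.
move=> bb; rewrite -(ltn_add2l (size M)) addn0 size_MN.
have cC : #|core| <= #|Z|.+1 by rewrite cardsU1; case: (v \in Z).
apply: leq_ltn_trans M_le_core (leq_ltn_trans cC (leq_ltn_trans small _)).
by apply: leq_trans (big_J bb) _; rewrite -HE card_Eplus.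
Qed.

Definition fan_paths := M ++ (if b then take 1 N else [::]).

Definition fan := map trunc fan_paths.

Lemma fan_pathsP p : p \in fan_paths -> p \in Qs /\ meets p || b.
Proof.
rewrite mem_cat mem_filter => /orP[/andP[-> ->] // | ].
by case: (b) => //= /mem_take; rewrite mem_filter orbT => /andP[_ ->].
Qed.

Lemma fan_paths_N p p' : p \in fan_paths -> p' \in fan_paths ->
  ~~ meets p -> ~~ meets p' -> p = p'.
Proof.
rewrite !mem_cat !mem_filter => /orP[/andP[mp _] | pN]; first by rewrite mp.
move=> /orP[/andP[mp' _] | p'N]; first by rewrite mp'.
by move: pN p'N; case: (b) => //; case: (N) => [|x N'] //=; rewrite take0 !inE => /eqP -> /eqP ->.
Qed.

Lemma fan_system : rS_path_system e r cut fan.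
Proof.
have [uQ _ _] := HQ.
have uL : uniq fan_paths.
  rewrite cat_uniq filter_uniq //=; case: (b); rewrite ?andbT //= take_uniq ?filter_uniq //.
  by rewrite andbT; apply/hasPn => p /mem_take; rewrite !mem_filter => /andP[/negbTE ->].
have famL : disjoint_family fan.
  apply: disjoint_family_of_map uL _ _ => [p p' pL p'L np | p /fan_pathsP [pQ _]].
    have [pQ _] := fan_pathsP pL; have [p'Q _] := fan_pathsP p'L.
    apply: trunc_disjoint => //; apply/negPn/negP => /norP[nm nm'].
    by rewrite (fan_paths_N pL p'L nm nm') eqxx in np.
  exact: trunc_nil.
split; [exact: famL.1 | | exact: famL.2].
by move=> _ /mapP[p /fan_pathsP[pQ m] ->]; exact: trunc_rS.
Qed.

Lemma Vplus_fan : Vplus r fan = cut.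
Proof.
apply/setP => x; rewrite inE; apply/idP/idP.
  by case/mapP => y /mapP[p /fan_pathsP[pQ m] ->] ->; case: (trunc_rS pQ m).
rewrite /fan /fan_paths !map_cat mem_cat.
have [xC | nxC] := boolP (x \in core); first by rewrite core_ends_M.
rewrite /cut; case: (b) (N_gt0) => [/(_ isT) | _]; last by rewrite (negbTE nxC).
rewrite in_setU1 (negbTE nxC) orbF => + /eqP ->.
case E: (N) => [|p N'] // _; have : p \in N by rewrite E mem_head.
rewrite mem_filter => /andP[nm pQ]; rewrite /= take0 /=.
have [-> [q -> _]] := trunc_free pQ nm.
by rewrite last_rcons mem_head orbT.
Qed.

Lemma fan_last_edge : exists2 p, p \in fan & term_edge r p = (u, v).
Proof.
have /mapP[y /mapP[p pM ->] Ev] := core_ends_M (setU11 v Z).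
move: pM; rewrite mem_filter => /andP[mp pQ].
have [s1 [z [Et zC s1C ws1 /and3P[pp _ _]]]] := trunc_meets pQ mp.
exists (trunc p); first by rewrite map_f // mem_cat mem_filter mp pQ.
rewrite Et last_rcons in Ev; subst z; rewrite Et term_edge_rcons.
move: pp; rewrite rcons_path => /andP[ps1 ev].
by rewrite (reach_in_nbr (reach_path ps1 (unblocked s1C ws1)) ev).
Qed.

Lemma cut_fan : exists (S : {set V}) (Ps : seq (seq V)),
  [/\ r \notin S /\ v \in S, rS_path_system e r S Ps, Vplus r Ps = S,
      (forall f, f \in in_edges e v :\: [set (u, v)] -> separates e r S f.1) &
      exists2 p, p \in Ps & term_edge r p = (u, v)].
Proof.
exists cut, fan; split; [split | exact: fan_system | exact: Vplus_fan
  | exact: cut_separates | exact: fan_last_edge].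
- by rewrite /cut; case: (b); rewrite !inE !negb_or ![r == _]eq_sym ?wr vr rZ.
- exact/core_cut/setU11.
Qed.

End Fan.

End Cut.

End Reach.

End Setting.

Theorem lemma4p10 (V : finType) (e : rel V) (r w : V) (I : {set V * V})
    (u v : V) :
  loopless e ->
  w != r ->
  in_G e r w I ->
  (forall f, f \in in_edges e w :\: I -> in_G e r w (I :|: [set f])) ->
  (u, v) \in edges e -> u != r -> v != w ->
  ~ in_G (del_edge e u v) r w I ->
  exists (S : {set V}) (Ps : seq (seq V)),
    [/\ r \notin S /\ v \in S,
        rS_path_system e r S Ps, Vplus r Ps = S,
        (forall f, f \in in_edges e v :\: [set (u, v)] -> separates e r S f.1) &
        exists2 p, p \in Ps & term_edge r p = (u, v)].
Proof.
(* The edge [uv] need not be assumed: the fan found ends with it. *)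
move=> loop_e wr [I_in [Qs [HQ HE]]] grow _ ur vw notG.
have [Z [sepZ small rZ wZ]] := small_separator loop_e wr ur vw I_in notG.
have [s2 [s2_path s2_last s2_Z vr]] := escape_walk loop_e wr sepZ small HQ HE.
have fan := cut_fan wr vw I_in sepZ vr s2_path s2_last s2_Z rZ wZ.
have [/existsP[y /andP[yR eyw]] | no_y] := boolP [exists y, (y \in reach e r w v Z) && e y w].
  have [yI | yI] := boolP ((y, w) \in I).
    have yr := reach_I sepZ yR yI; rewrite yr in yI.
    by apply: (fan true _ I Qs) => // _; rewrite (card_I r I_in) yI addn1.
  have [|_ [Qs' [HQ' HE']]] := grow (y, w); first by rewrite !inE yI eyw eqxx.
  apply: (fan true _ (I :|: [set (y, w)]) Qs' (subsetUl _ _) HQ' HE') => // _.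
  by rewrite setUC cardsU1 yI (card_I r I_in) add1n ltnS leq_addr.
apply: (fan false _ I Qs) => // _ y yR; apply: contra no_y => eyw.
by apply/existsP; exists y; rewrite yR.
Qed.
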